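(* Let $\kappa\geq\omega$ be a cardinal smaller than the first measurable cardinal, and let $\Phi\subseteq P(\kappa)$ be a filter all of whose elements are infinite sets. Then there is a partition $\kappa=\bigcup_{n\in\omega}I_n$ (into pairwise disjoint sets, some possibly empty) such that for every $F\in\Phi$ the set $\{n\in\omega: F\cap I_n\neq\emptyset\}$ is infinite.
   Context: A filter on a set $I$ is a nonempty family of subsets of $I$ closed under supersets and finite intersections. ''Smaller than the first measurable cardinal'' means: if measurable cardinals exist, $\kappa$ is below the least one; if none exist, every cardinal qualifies. Equivalently, every countably complete ultrafilter on $\kappa$ is principal. *)

From Stdlib Require Import List.

Definition finite_set {T : Type} (A : T -> Prop) : Prop :=
  exists l : list T, forall x, A x -> In x l.

Definition infinite_set {T : Type} (A : T -> Prop) : Prop := ~ finite_set A.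

Definition is_filter {T : Type} (Phi : (T -> Prop) -> Prop) : Prop :=
  (exists A, Phi A) /\
  (forall A B : T -> Prop, Phi A -> (forall x, A x -> B x) -> Phi B) /\
  (forall A B : T -> Prop, Phi A -> Phi B -> Phi (fun x => A x /\ B x)).

Definition is_ultrafilter {T : Type} (U : (T -> Prop) -> Prop) : Prop :=
  is_filter U /\ ~ U (fun _ => False) /\
  (forall A : T -> Prop, U A \/ U (fun x => ~ A x)).

Definition countably_complete {T : Type} (U : (T -> Prop) -> Prop) : Prop :=
  forall A : nat -> T -> Prop, (forall n, U (A n)) -> U (fun x => forall n, A n x).

Definition principal {T : Type} (U : (T -> Prop) -> Prop) : Prop :=
  exists a : T, forall A : T -> Prop, U A <-> A a.

(* The cardinal |T| is smaller than the first measurable cardinal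
   (equivalent formulation given in the paper's context). *)
Definition below_first_measurable (T : Type) : Prop :=
  forall U : (T -> Prop) -> Prop,
    is_ultrafilter U -> countably_complete U -> principal U.

(* Argue by contradiction: if every partition of T into countably many pieces
   has some F in Phi meeting only finitely many pieces, then the filter
   generated by Phi and the cofinite sets, which is proper because the elements
   of Phi are infinite, extends to an ultrafilter U that is countably complete.
   Indeed, if A_n are in U but their intersection is not, then partition T by
   the index of the first A_n a point misses; some F in Phi lies, up to the
   finitely many pieces it meets, inside A_0, ..., A_(N-1) and outside the
   intersection, which is impossible. Since U contains every cofinite set it is
   not principal, contradicting the smallness of T. *)
From Stdlib Require Import Classical List Wf_nat.
From mathcomp Require Import all_boot zify.
From mathcomp Require Import boolp classical_sets filter.

Lemma finite_set_nat_bounded (A : nat -> Prop) :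
  finite_set A -> exists N, forall n, A n -> n < N.
Proof.
move=> [l Hl]; suff [N HN] : exists N, forall n, In n l -> n < N.
  by exists N => n /Hl /HN.
elim: l {Hl} => [|a l [N HN]]; first by exists 0.
by exists (maxn N a.+1) => n [<-|/HN]; lia.
Qed.

Definition is_partition {T : Type} (I : nat -> set T) : Prop :=
  (forall x, exists n, I n x) /\ (forall m n x, I m x -> I n x -> m = n).

Section FirstFailurePartition.
Context {T : Type} (A : nat -> set T).

Definition first_failure_partition (n : nat) (x : T) : Prop :=
  match n with
  | 0 => forall k, A k x
  | k.+1 => ~ A k x /\ forall j, j < k -> A j x
  end.

Lemma first_failure_partitionP : is_partition first_failure_partition.
Proof.
split.
- move=> x; case: (Classical_Prop.classic (forall k, A k x)) => [Hall|].
    exists 0; exact: Hall.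
  move=> /existsNP [k0 Hk0].
  have [k [[Hk Hmin] _]] := dec_inh_nat_subset_has_unique_least_element
    (fun k => ~ A k x) (fun k => Classical_Prop.classic _) (ex_intro _ k0 Hk0).
  exists k.+1; split => // j ltjk; apply: NNPP => /Hmin; lia.
- move=> [|m] [|n] x //=.
  + by move=> Hall [Hn _]; case: Hn; apply: Hall.
  + by move=> [Hm _] Hall; case: Hm; apply: Hall.
  + move=> [Hm Hltm] [Hn Hltn]; congr S.
    by case: (ltngtP m n) => // [/Hltn|/Hltm].
Qed.

Lemma first_failure_partition_index_gt {N x n} :
  (forall j, j < N -> A j x) -> ~ (forall k, A k x) ->
  first_failure_partition n x -> N < n.
Proof.
move=> HxN Hnall; case: n => [//|k] /= [Hk _].
by rewrite ltnS leqNgt; apply/negP => /HxN.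
Qed.

End FirstFailurePartition.

Lemma filter_forall_lt (T : Type) (U : set_system T) (A : nat -> set T) :
  Filter U -> (forall n, U (A n)) ->
  forall N, U (fun x => forall j, j < N -> A j x).
Proof.
move=> FU HA; elim=> [|N IH]; first by apply: filterS filterT.
apply: filterS (filterI IH (HA N)) => x [HxN HxA] j.
by rewrite ltnS leq_eqVlt => /orP [/eqP ->|/HxN].
Qed.

Lemma UltraFilter_is_ultrafilter {T : Type} {U : set_system T} :
  UltraFilter U -> is_ultrafilter U.
Proof.
move=> UU; split; [split; [|split]|split].
- by exists setT; apply: filterT.
- by move=> P Q UP PQ; apply: filterS UP.
- by move=> P Q; apply: filterI.
- exact: filter_not_empty.
- by move=> P; apply: in_ultra_setVsetC.
Qed.

Definition cofinite_trace {T : Type} (Phi : set_system T) : set_system T :=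
  fun A => exists2 F, Phi F & exists l : list T, forall x, F x -> ~ In x l -> A x.

Section CofiniteTrace.
Context {T : Type} {Phi : set_system T}.

Lemma cofinite_trace_sub F : Phi F -> cofinite_trace Phi F.
Proof. by move=> PF; exists F => //; exists nil. Qed.

Hypothesis HPhi : is_filter Phi.

Lemma cofinite_trace_cofinite l : cofinite_trace Phi (fun x => ~ In x l).
Proof. by have [[F0 PF0] _] := HPhi; exists F0 => //; exists l. Qed.

Hypothesis HPhi_inf : forall F, Phi F -> infinite_set F.

Lemma cofinite_trace_proper : ProperFilter (cofinite_trace Phi).
Proof.
have [[F0 PF0] [_ HPhiI]] := HPhi.
split; last split.
- move=> [F PF [l Hl]]; apply: (HPhi_inf _ PF); exists l => x Fx.
  by apply: NNPP => /(Hl x Fx).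
- by exists F0 => //; exists nil.
- move=> P Q [F1 PF1 [l1 H1]] [F2 PF2 [l2 H2]].
  exists (fun x => F1 x /\ F2 x); first exact: HPhiI.
  exists (l1 ++ l2) => x [F1x F2x] Hx; split.
  + by apply: H1 => // Hx1; apply/Hx/in_or_app; left.
  + by apply: H2 => // Hx2; apply/Hx/in_or_app; right.
- move=> P Q PQ [F PF [l Hl]]; exists F => //; exists l => x Fx Hx.
  exact/PQ/Hl.
Qed.

End CofiniteTrace.

Lemma countably_complete_of_no_spreading_partition {T : Type}
    {Phi U : set_system T} :
  UltraFilter U -> (forall F, Phi F -> U F) ->
  (forall I, is_partition I ->
     exists2 F, Phi F & finite_set (fun n : nat => exists x, F x /\ I n x)) ->
  countably_complete U.
Proof.
move=> UU PhiU Hno A HA; apply: NNPP => HnotU.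
have UC : U (fun x => ~ (forall n, A n x)).
  by case: (in_ultra_setVsetC (fun x => forall n, A n x) UU).
have [F PF /finite_set_nat_bounded [N HN]] :=
  Hno _ (first_failure_partitionP A).
have : U (fun x => (F x /\ forall j, j < N -> A j x) /\ ~ (forall n, A n x)).
  by apply: filterI UC; apply: filterI; [apply: PhiU | apply: filter_forall_lt].
move=> /filter_ex [x [[Fx HxN] Hxnall]].
have [n Hn] := (first_failure_partitionP A).1 x.
have := first_failure_partition_index_gt A HxN Hxnall Hn.
by have := HN n (ex_intro _ x (conj Fx Hn)); lia.
Qed.

Theorem fact2p2 (T : Type)
  (Hinf : infinite_set (fun _ : T => True))
  (Hmeas : below_first_measurable T)
  (Phi : (T -> Prop) -> Prop)
  (HPhi : is_filter Phi)
  (HPhi_inf : forall F, Phi F -> infinite_set F) :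
  exists I : nat -> T -> Prop,
    (forall x : T, exists n, I n x) /\
    (forall m n x, I m x -> I n x -> m = n) /\
    (forall F, Phi F -> infinite_set (fun n : nat => exists x, F x /\ I n x)).
Proof.
apply: NNPP => Hbad.
have Hno : forall I, is_partition I ->
    exists2 F, Phi F & finite_set (fun n : nat => exists x, F x /\ I n x).
  move=> I [? ?]; apply: NNPP => Hnone; apply: Hbad.
  exists I; do 2!split => //.
  by move=> F PF Hfin; apply: Hnone; exists F.
have [U [UU PhiU]] := ultraFilterLemma (cofinite_trace_proper HPhi HPhi_inf).
have Ucc : countably_complete U.
  apply: (countably_complete_of_no_spreading_partition UU _ Hno).
  by move=> F /cofinite_trace_sub /PhiU.
have [b Hb] := Hmeas U (UltraFilter_is_ultrafilter UU) Ucc.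
have : U (fun x => ~ In x (b :: nil)) by exact/PhiU/(cofinite_trace_cofinite HPhi).
by move=> /Hb; apply; left.
Qed.
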